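(* Let $n\ge2$ and let $\Phi:[n]\times[n-1]\times\cdots\times[2]\to\mathfrak S_n$, $\Phi(j_n,\dots,j_2)=\tau(j_2,2)\tau(j_3,3)\cdots\tau(j_n,n)$. If two sequences $s,s'$ differ in exactly one coordinate, then $\Phi(s')=\Phi(s)\,\sigma$ for some $\sigma\in\mathfrak S_n$ that is either a transposition or a $3$-cycle. If moreover both $s,s'$ satisfy $j_k\le k-1$ for all $k$ (so $\Phi(s),\Phi(s')\in\mathcal C_n$), then $\sigma$ is a $3$-cycle. Consequently, any listing of $[n-1]\times[n-2]\times\cdots\times[1]$ in which consecutive words differ in exactly one coordinate is mapped by $\Phi$ to a listing of all of $\mathcal C_n$ (each once) in which each element is obtained from the previous one by right multiplication by a $3$-cycle.
   Context: $[n]=\{1,\dots,n\}$, $\mathfrak S_n$ the symmetric group on $[n]$, right action, products composed left to right ($i(\sigma\rho)=(i\sigma)\rho$); $\tau(i,j)$ the transposition exchanging $i,j$, with $\tau(k,k)$ the identity. $\mathcal C_n$ is the set of $n$-cycles in $\mathfrak S_n$. $\Phi$ is a bijection onto $\mathfrak S_n$ and restricts to a bijection from $[n-1]\times\cdots\times[1]$ (sequences with $j_k\le k-1$) onto $\mathcal C_n$. *)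

From mathcomp Require Import all_boot all_order all_fingroup.
Set Implicit Arguments. Unset Strict Implicit. Unset Printing Implicit Defensive.

(* Conventions (0-based): [n] = 'I_n, point i+1 of the paper is i : 'I_n.
   A sequence (j_n,...,j_2) is encoded as s : {ffun 'I_n -> 'I_n} where
   coordinate k : 'I_n stands for the paper's coordinate k+1 and value s k
   stands for j_{k+1} = s k + 1.  Coordinate 0 (paper coordinate 1, not part
   of the sequence) is forced to be 0 by the domain predicate, so that
   tperm (s 0) 0 = 1 just like the absent factor tau(1,1).
   MathComp's permutation product satisfies (p * q) x = q (p x), i.e. it is
   composition left to right, matching the paper's right-action convention. *)

Section Defs.
Variable n : nat.

Definition phi_dom (s : {ffun 'I_n -> 'I_n}) : bool := [forall k, s k <= k].

Definition cyc_dom (s : {ffun 'I_n -> 'I_n}) : bool :=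
  phi_dom s && [forall k : 'I_n, (0 < k) ==> (s k < k)].

Definition Phi (s : {ffun 'I_n -> 'I_n}) : 'S_n := (\prod_(k < n) tperm (s k) k)%g.

Definition differ_one (s s' : {ffun 'I_n -> 'I_n}) : bool :=
  #|[set k | s k != s' k]| == 1.

Definition is_transposition (g : 'S_n) : bool :=
  [exists i, exists j, (i != j) && (g == tperm i j)].

Definition is_3cycle (g : 'S_n) : bool :=
  [exists a, exists b, exists c,
    [&& a != b, b != c, a != c, g a == b, g b == c, g c == a &
        [forall x, (x \notin [:: a; b; c]) ==> (g x == x)]]].

Definition is_ncycle (g : 'S_n) : bool := [set: 'I_n] \in porbits g.

End Defs.

(* Changing one coordinate k of s replaces the factor tau(a,k) of Phi(s) by
   tau(b,k), so Phi(s)^-1 Phi(s') is a conjugate of tau(a,k) tau(b,k): a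
   transposition if a or b equals k, a 3-cycle otherwise.  The prefix products
   of Phi(s) fix every point from k on until the k-th factor, which sends k to
   j_k; this recovers s from Phi(s), and Phi is onto S_n since its domain has
   n! elements.  A factor with j_k <> k joins the fixed point k to another
   cycle, so Phi(s) has as many cycles as s has coordinates with j_k = k; it is
   an n-cycle exactly when only the vacuous coordinate 1 is such. *)

From mathcomp Require Import all_boot all_order all_fingroup.
From mathcomp Require Import zify.
Set Implicit Arguments. Unset Strict Implicit. Unset Printing Implicit Defensive.
Local Open Scope group_scope.

Lemma porbit_fixed (T : finType) (g : {perm T}) x : g x = x -> porbit g x = [set x].
Proof.
move=> gx; apply/setP => y; rewrite in_set1; apply/porbitP/eqP => [[i ->]|->].
  by elim: i => [|i IHi]; rewrite ?expg0 ?perm1 // expgSr permM IHi gx.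
by exists 0; rewrite expg0 perm1.
Qed.

Lemma card_porbits1 (T : finType) : #|porbits (1 : {perm T})| = #|T|.
Proof.
rewrite /porbits (eq_imset _ (fun x => porbit_fixed (perm1 x))).
by rewrite card_imset //; apply: set1_inj.
Qed.

Lemma porbits_mul_tperm_r (T : finType) (g : {perm T}) x y :
  #|porbits (g * tperm x y)| + (x \notin porbit g y).*2 = #|porbits g| + (x != y).
Proof.
rewrite -porbitsV invMg tpermV -(porbitsV g) -(porbitV g).
exact: porbits_mul_tperm.
Qed.

Section Prefix.
Variables (n : nat) (s : {ffun 'I_n.+1 -> 'I_n.+1}).

Definition Phi_prefix m : 'S_n.+1 := \prod_(i < m) tperm (s (inord i)) (inord i).

Lemma Phi_prefix0 : Phi_prefix 0 = 1.
Proof. by rewrite /Phi_prefix big_ord0. Qed.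

Lemma Phi_prefixS m : Phi_prefix m.+1 = Phi_prefix m * tperm (s (inord m)) (inord m).
Proof. by rewrite /Phi_prefix big_ord_recr. Qed.

Lemma Phi_prefix_full : Phi_prefix n.+1 = Phi s.
Proof. by apply: eq_bigr => i _; rewrite inord_val. Qed.

Hypothesis s_dom : phi_dom s.

Lemma Phi_prefix_fix m (x : 'I_n.+1) : m <= x -> Phi_prefix m x = x.
Proof.
elim: m => [_|m IHm lt_mx]; first by rewrite Phi_prefix0 perm1.
have lt_mn : m < n.+1 by apply: leq_trans lt_mx (ltnW (ltn_ord x)).
rewrite Phi_prefixS permM IHm ?(ltnW lt_mx) // tpermD //; apply/eqP => /(congr1 val) /=.
  have := forallP s_dom (inord m); rewrite inordK // => le_sm eq_sx.
  by rewrite eq_sx in le_sm; move: (leq_trans lt_mx le_sm); rewrite ltnn.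
by rewrite inordK // => eq_mx; move: lt_mx; rewrite eq_mx ltnn.
Qed.

Lemma Phi_prefix_last m : m < n.+1 -> Phi_prefix m.+1 (inord m) = s (inord m).
Proof.
move=> lt_mn; rewrite Phi_prefixS permM Phi_prefix_fix ?inordK //; exact: tpermR.
Qed.

(* The factor [tperm (s k) k] is trivial or joins the fixed point [k] of the
   prefix to another cycle. *)
Lemma card_porbits_Phi_prefix m : m <= n.+1 ->
  #|porbits (Phi_prefix m)| = #|[set k : 'I_n.+1 | (m <= k) || (s k == k)]|.
Proof.
elim: m => [_|m IHm lt_mn].
  by rewrite Phi_prefix0 card_porbits1 cardsT.
set A := fun j => [set x : 'I_n.+1 | (j <= x) || (s x == x)].
set k : 'I_n.+1 := inord m; have val_k : nat_of_ord k = m by rewrite inordK.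
have Am1_k : A m.+1 :\ k = A m :\ k.
  apply/setP => x; rewrite !inE ltn_neqAle; case: eqVneq => //= neq_xk.
  suff -> : m != x by [].
  by apply: contra neq_xk => /eqP eq_mx; apply/eqP/val_inj; rewrite /= -eq_mx.
have card_Am : #|A m| = 1 + #|A m :\ k| by rewrite (cardsD1 k) inE val_k leqnn.
have card_Am1 : #|A m.+1| = (s k == k) + #|A m :\ k|.
  by rewrite (cardsD1 k) Am1_k inE val_k ltnn.
have fix_k : Phi_prefix m k = k by rewrite Phi_prefix_fix ?val_k.
have := porbits_mul_tperm_r (Phi_prefix m) (s k) k.
rewrite -Phi_prefixS porbit_fixed // in_set1 IHm ?(ltnW lt_mn) // -/(A m) card_Am.
by rewrite -/(A m.+1) card_Am1; case: eqP => _ /=; lia.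
Qed.

End Prefix.

Lemma phi_dom_ord0 n (s : {ffun 'I_n.+1 -> 'I_n.+1}) : phi_dom s -> s ord0 = ord0.
Proof. by move=> s_dom; apply/val_inj/eqP; rewrite /= -leqn0 (forallP s_dom ord0). Qed.

Lemma Phi_prefix_inj n (s s' : {ffun 'I_n.+1 -> 'I_n.+1}) m :
  phi_dom s -> phi_dom s' -> m <= n.+1 -> Phi_prefix s m = Phi_prefix s' m ->
  forall i : 'I_n.+1, i < m -> s i = s' i.
Proof.
move=> s_dom s'_dom; elim: m => [//|m IHm] lt_mn eq_ss' i.
have eq_m : s (inord m) = s' (inord m).
  by rewrite -(Phi_prefix_last s_dom lt_mn) eq_ss' (Phi_prefix_last s'_dom lt_mn).
move: eq_ss'; rewrite !Phi_prefixS eq_m => /mulIg eq_ss'.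
rewrite ltnS leq_eqVlt => /orP[/eqP eq_im|]; last exact: IHm (ltnW lt_mn) eq_ss' i.
by rewrite -(inord_val i) eq_im.
Qed.

Lemma Phi_inj n (s s' : {ffun 'I_n.+1 -> 'I_n.+1}) :
  phi_dom s -> phi_dom s' -> Phi s = Phi s' -> s = s'.
Proof.
move=> s_dom s'_dom; rewrite -!Phi_prefix_full => eq_ss'; apply/ffunP => i.
exact: Phi_prefix_inj s_dom s'_dom (leqnn _) eq_ss' i (ltn_ord i).
Qed.

Lemma card_ord_leq n (k : 'I_n) : #|[pred i : 'I_n | i <= k]| = k.+1.
Proof. by rewrite -sum1_card (big_ord_narrow (ltn_ord k)) sum1_card card_ord. Qed.

Lemma card_phi_dom n : #|[set s : {ffun 'I_n -> 'I_n} | phi_dom s]| = n`!.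
Proof.
rewrite (@eq_card _ _ (family (fun k : 'I_n => [pred i : 'I_n | i <= k]))) => [|s].
  rewrite card_family foldrE big_image fact_prod big_add1 big_mkord.
  by apply: eq_bigr => k _; rewrite card_ord_leq.
by rewrite inE; apply/forallP/familyP => dom_s k; apply: dom_s.
Qed.

Lemma Phi_onto n (g : 'S_n.+1) : exists2 s, phi_dom s & Phi s = g.
Proof.
set D := [set s : {ffun 'I_n.+1 -> 'I_n.+1} | phi_dom s].
have /imsetP[s] : g \in @Phi n.+1 @: D.
  suff -> : @Phi n.+1 @: D = setT by rewrite in_setT.
  apply/eqP; rewrite eqEcard subsetT cardsT card_Sn card_in_imset ?card_phi_dom ?leqnn //.
  by move=> s s'; rewrite !inE; apply: Phi_inj.
by rewrite inE => s_dom ->; exists s.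
Qed.

Lemma is_ncycle_card_porbits n (g : 'S_n) : is_ncycle g = (#|porbits g| == 1%N).
Proof.
apply/idP/cards1P => [ncyc_g|[A porbits_g]].
  exists [set: 'I_n]; apply/setP => B; rewrite in_set1.
  apply/idP/eqP => [/imsetP[x _ ->]|->//].
  case/imsetP: ncyc_g => y _ porbit_y; rewrite porbit_y; apply/eqP.
  by rewrite eq_porbit_mem -porbit_y inE.
have porbitE x : porbit g x = A by apply/set1P; rewrite -porbits_g imset_f.
rewrite /is_ncycle porbits_g in_set1; apply/eqP/setP => x.
by rewrite inE -(porbitE x) porbit_id.
Qed.

Lemma card_porbits_Phi n (s : {ffun 'I_n.+1 -> 'I_n.+1}) :
  phi_dom s -> #|porbits (Phi s)| = #|[set k | s k == k]|.
Proof.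
move=> s_dom; rewrite -Phi_prefix_full card_porbits_Phi_prefix //.
by apply: eq_card => k; rewrite !inE leqNgt ltn_ord.
Qed.

Lemma is_ncycle_Phi n (s : {ffun 'I_n.+1 -> 'I_n.+1}) :
  phi_dom s -> is_ncycle (Phi s) = cyc_dom s.
Proof.
move=> s_dom; rewrite is_ncycle_card_porbits card_porbits_Phi // (cardsD1 ord0).
rewrite inE phi_dom_ord0 // eqxx add1n eqSS cards_eq0 /cyc_dom s_dom /=.
apply/eqP/forallP => [/setP fixed0 k|lt_s]; last first.
  apply/setP => k; rewrite !inE; case: (posnP k) => [k0|k_gt0].
    by rewrite (_ : k = ord0) ?eqxx //; apply: val_inj.
  have := implyP (lt_s k) k_gt0; rewrite ltn_neqAle val_eqE => /andP[/negbTE -> _].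
  by rewrite andbF.
apply/implyP => k_gt0; have k_neq0 : k != ord0 by rewrite -val_eqE /= -lt0n.
have := fixed0 k; rewrite !inE k_neq0 => /negbT.
by rewrite ltn_neqAle (forallP s_dom k) andbT val_eqE.
Qed.

Lemma is_transposition_tpermJ n (x y : 'I_n) (h : 'S_n) :
  x != y -> is_transposition (tperm x y ^ h).
Proof.
move=> neq_xy; rewrite tpermJ; apply/existsP; exists (h x); apply/existsP; exists (h y).
by rewrite (inj_eq perm_inj) neq_xy eqxx.
Qed.

Lemma is_3cycleJ n (g h : 'S_n) : is_3cycle g -> is_3cycle (g ^ h).
Proof.
case/existsP=> a /existsP[b /existsP[c /and4P[ab bc ac /and4P[ga gb gc /forallP fixg]]]].
apply/existsP; exists (h a); apply/existsP; exists (h b); apply/existsP; exists (h c).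
rewrite !(inj_eq perm_inj) ab bc ac !permJ (eqP ga) (eqP gb) (eqP gc) !eqxx /=.
apply/forallP => x; apply/implyP => x_out; rewrite -(permKV h x) permJ.
suff /eqP -> : g (h^-1 x) == h^-1 x by [].
apply: (implyP (fixg _)); apply: contra x_out; rewrite !inE.
by case/or3P => /eqP <-; rewrite permKV eqxx ?orbT.
Qed.

Lemma is_3cycle_tpermM n (a b k : 'I_n) :
  a != b -> a != k -> b != k -> is_3cycle (tperm a k * tperm b k).
Proof.
move=> ab ak bk; have ba : b != a by rewrite eq_sym.
have ka : k != a by rewrite eq_sym.
have kb : k != b by rewrite eq_sym.
apply/existsP; exists k; apply/existsP; exists a; apply/existsP; exists b.
rewrite ka ab kb !permM tpermR (tpermD ba ka) tpermL tpermR (tpermD ab kb) tpermL !eqxx /=.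
apply/forallP => x; rewrite !inE !negb_or; apply/implyP => /and3P[xk xa xb].
by rewrite permM !tpermD // eq_sym.
Qed.

Lemma differ_one_at n (s s' : {ffun 'I_n -> 'I_n}) : differ_one s s' ->
  exists k, s k != s' k /\ forall i, i != k -> s i = s' i.
Proof.
case/cards1P => k diff_k; exists k; split; first by have := set11 k; rewrite -diff_k inE.
move=> i neq_ik; apply: contraNeq neq_ik => diff_i.
by rewrite -in_set1 -diff_k inE.
Qed.

Lemma Phi_split n (s : {ffun 'I_n.+1 -> 'I_n.+1}) (k : 'I_n.+1) :
  Phi s = \prod_(0 <= i < k) tperm (s (inord i)) (inord i) * tperm (s k) k *
          \prod_(k.+1 <= i < n.+1) tperm (s (inord i)) (inord i).
Proof.
have -> : Phi s = \prod_(0 <= i < n.+1) tperm (s (inord i)) (inord i).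
  by rewrite -Phi_prefix_full big_mkord.
rewrite (big_cat_nat (leq0n k) (ltnW (ltn_ord k))) (big_cat_nat (leqnSn k) (ltn_ord k)).
rewrite big_nat1 inord_val; exact: mulgA.
Qed.

Lemma Phi_update n (s s' : {ffun 'I_n.+1 -> 'I_n.+1}) (k : 'I_n.+1) :
  (forall i, i != k -> s i = s' i) ->
  exists h : 'S_n.+1, Phi s' = Phi s * (tperm (s k) k * tperm (s' k) k) ^ h.
Proof.
pose F i := tperm (s (inord i)) (inord i).
move=> eq_off_k; exists (\prod_(k.+1 <= i < n.+1) F i).
have eq_at i : i < n.+1 -> i != k -> s' (inord i) = s (inord i).
  move=> lt_in neq_ik; rewrite eq_off_k //; apply: contra neq_ik => /eqP <-.
  by rewrite inordK.
rewrite !(Phi_split _ k).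
rewrite [\prod_(0 <= i < k) _](eq_big_nat _ _ (F2 := F)); last first.
  by move=> i /andP[_ lt_ik]; rewrite eq_at ?(ltn_trans lt_ik) ?ltn_eqF.
rewrite [\prod_(k.+1 <= i < n.+1) _](eq_big_nat _ _ (F2 := F)); last first.
  by move=> i /andP[lt_ki lt_in]; rewrite eq_at ?gtn_eqF.
by rewrite conjgE !mulgA mulgK -(mulgA _ (tperm (s k) k) (tperm (s k) k)) tperm2 mulg1.
Qed.

Lemma Phi_differ_one n (s s' : {ffun 'I_n.+1 -> 'I_n.+1}) : differ_one s s' ->
  exists sigma : 'S_n.+1, Phi s' = Phi s * sigma /\
    (is_transposition sigma \/ is_3cycle sigma).
Proof.
case/differ_one_at => k [neq_k /Phi_update[h ->]]; eexists; split; first by [].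
have [sk|ak] := eqVneq (s k) k.
  rewrite sk eq_sym in neq_k *; rewrite tperm1 mul1g.
  by left; apply: is_transposition_tpermJ.
have [s'k|bk] := eqVneq (s' k) k; last by right; apply/is_3cycleJ/is_3cycle_tpermM.
by left; rewrite s'k tperm1 mulg1; apply: is_transposition_tpermJ.
Qed.

Lemma Phi_differ_one_cyc n (s s' : {ffun 'I_n.+1 -> 'I_n.+1}) :
  cyc_dom s -> cyc_dom s' -> differ_one s s' ->
  exists sigma : 'S_n.+1, Phi s' = Phi s * sigma /\ is_3cycle sigma.
Proof.
move=> /andP[s_dom /forallP lt_s] /andP[s'_dom /forallP lt_s'].
case/differ_one_at => k [neq_k /Phi_update[h ->]]; eexists; split; first by [].
have k_gt0 : 0 < k.
  rewrite lt0n; apply: contra neq_k => /eqP k0; have -> : k = ord0 by apply: val_inj.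
  by rewrite !phi_dom_ord0.
have neq_sk (t : {ffun 'I_n.+1 -> 'I_n.+1}) : (0 < k) ==> (t k < k) -> t k != k.
  by move/implyP/(_ k_gt0)/ltn_eqF; apply: contraFneq => ->.
by apply/is_3cycleJ/is_3cycle_tpermM; [|exact: neq_sk (lt_s k)|exact: neq_sk (lt_s' k)].
Qed.

Local Close Scope group_scope.

Theorem mainTheorem5 (n : nat) (hn : 2 <= n) :
  (forall s s' : {ffun 'I_n -> 'I_n},
     phi_dom s -> phi_dom s' -> differ_one s s' ->
     exists sigma : 'S_n, Phi s' = (Phi s * sigma)%g /\
       (is_transposition sigma \/ is_3cycle sigma)) /\
  (forall s s' : {ffun 'I_n -> 'I_n},
     cyc_dom s -> cyc_dom s' -> differ_one s s' ->
     exists sigma : 'S_n, Phi s' = (Phi s * sigma)%g /\ is_3cycle sigma) /\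
  (forall L : seq {ffun 'I_n -> 'I_n},
     uniq L -> (forall s, (s \in L) = cyc_dom s) ->
     sorted (@differ_one n) L ->
     [/\ uniq (map (@Phi n) L),
         (forall g : 'S_n, (g \in map (@Phi n) L) = is_ncycle g) &
         sorted (fun p q : 'S_n => [exists sigma : 'S_n, is_3cycle sigma && (q == (p * sigma)%g)])
                (map (@Phi n) L)]).
Proof.
case: n hn => [//|n] _; split; [|split].
- by move=> s s' _ _; apply: Phi_differ_one.
- exact: Phi_differ_one_cyc.
move=> L uniq_L mem_L sorted_L.
have L_dom s : s \in L -> phi_dom s by rewrite mem_L => /andP[].
split.
- rewrite map_inj_in_uniq // => s s' /L_dom s_dom /L_dom s'_dom; exact: Phi_inj.
- move=> g; apply/mapP/idP => [[s s_L ->]|ncyc_g].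
    by rewrite is_ncycle_Phi ?L_dom // -mem_L.
  have [s s_dom Phi_s] := Phi_onto g; exists s => //.
  by rewrite mem_L -is_ncycle_Phi // Phi_s.
- rewrite sorted_map; apply: (sub_in_sorted (P := mem L)) sorted_L; last exact/allP.
  move=> s s'; rewrite !mem_L => cyc_s cyc_s' /(Phi_differ_one_cyc cyc_s cyc_s').
  case=> sigma [Phi_s' ncyc_sigma]; apply/existsP; exists sigma.
  by rewrite ncyc_sigma Phi_s' eqxx.
Qed.
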